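(* Let $n$ be a positive integer and let $A(n)=(a_{ij})_{i,j\in\mathbb{N}}$ be the greedy matrix described in the context. For every $k\geq 1$, the length of the $k$-th row of $A(n)$ is less than $2n^3-n(n-3)$.
   Context: $\mathbb{N}=\{1,2,3,\dots\}$. Fix a positive integer $n$. The infinite $\{0,1\}$-matrix $A(n)=(a_{ij})_{i,j\in\mathbb{N}}$ is defined recursively. Its entries are determined row by row (row $1$ first), and within each row from left to right, so that $a_{kl}$ is determined after all $a_{ij}$ with $i<k$ and all $a_{kj}$ with $j<l$. One sets $a_{kl}=1$ if and only if all of the following hold: (1) $\sum_{j<l}a_{kj}<n+1$; (2) $\sum_{i<k}a_{il}<n+1$; (3) there is no pair $(i,j)$ with $1\le i<k$, $1\le j<l$ and $a_{ij}=a_{il}=a_{kj}=1$. Otherwise $a_{kl}=0$. The length of a row $(a_{k1},a_{k2},\dots)$ containing at least one but finitely many ones is $l-f+1$, where $f$ and $l$ are the smallest and the largest column index $j$ with $a_{kj}=1$. *)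

(* Indices are 1-based: row/column 0 is a dummy (always false). *)
From mathcomp Require Import all_boot all_algebra.

(* [decide n g k p l]: value of a_{kl}, given the previous rows g (rows 1..k-1)
   and the prefix p = [a_{k1}; ...; a_{k,l-1}] of row k. *)
Definition decide (n : nat) (g : nat -> nat -> bool) (k : nat) (p : seq bool)
    (l : nat) : bool :=
  [&& count id p < n.+1,
      sumn [seq (g i l : nat) | i <- iota 1 k.-1] < n.+1 &
      ~~ has (fun i => has (fun j => [&& g i j, g i l & nth false p j.-1])
                           (iota 1 l.-1))
             (iota 1 k.-1)].

Fixpoint rowpre (n : nat) (g : nat -> nat -> bool) (k l : nat) : seq bool :=
  match l with
  | 0 => [::]
  | l'.+1 => let p := rowpre n g k l' in rcons p (decide n g k p l'.+1)
  end.

Fixpoint grid (n k : nat) : nat -> nat -> bool :=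
  match k with
  | 0 => fun _ _ => false
  | k'.+1 =>
      let g := grid n k' in
      fun i j => if i <= k' then g i j
                 else if (i == k'.+1) && (0 < j) then nth false (rowpre n g k'.+1 j) j.-1
                 else false
  end.

Definition A (n : nat) (k l : nat) : bool := grid n k k l.

From mathcomp Require Import all_boot all_algebra.
From mathcomp Require Import zify.
From Stdlib Require Import Classical.
Import GRing.Theory Num.Theory.

(* Take ones a_{kf} and a_{kL} of row k, with f <= L.  A column l of [f, L]
   is of one of three kinds:
   - a_{kl} = 1: at most n + 1 columns;
   - a_{kl} would complete a rectangle with ones a_{ks}, a_{is}, a_{il}
     (s < l, i < k): choosing s, then i, then l gives at most n^3 columns;
   - otherwise the greedy rule forces column l to be full above row k.
   In a full column, each one a_{il} has a_{if} = 0 (else the second case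
   applies), and since neither the row nor the column of a_{if} is
   saturated, a rectangle a_{i'j}, a_{i'f}, a_{ij} (i' < i, j < f) excludes
   it.  Choosing i', j, i, l in turn bounds these ones by n^4, so there are
   at most n^4 / (n + 1) full columns, and
   L - f + 1 <= n + 1 + n^3 + n^4 / (n + 1) < 2 n^3 - n (n - 3). *)

Lemma size_rowpre n g k m : size (rowpre n g k m) = m.
Proof. by elim: m => //= m IH; rewrite size_rcons IH. Qed.

Lemma nth_rowpre n g k m j : j < m ->
  nth false (rowpre n g k m) j = nth false (rowpre n g k j.+1) j.
Proof.
elim: m => // m IH; rewrite ltnS leq_eqVlt => /orP [/eqP -> //|lt_jm].
by rewrite /= nth_rcons size_rowpre lt_jm IH.
Qed.

Lemma nth_rowpre_last n g k j :
  nth false (rowpre n g k j.+1) j = decide n g k (rowpre n g k j) j.+1.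
Proof. by rewrite /= nth_rcons size_rowpre ltnn eqxx. Qed.

Lemma A_rowpre n k j : A n k.+1 j.+1 = nth false (rowpre n (grid n k) k.+1 j.+1) j.
Proof. by rewrite /A /= ltnn eqxx. Qed.

Lemma grid_A n k i j : i <= k -> grid n k i j = A n i j.
Proof.
elim: k i => [|k IH] i; first by rewrite leqn0 => /eqP ->.
rewrite leq_eqVlt => /orP [/eqP -> //|lt_ik].
by rewrite /= -ltnS lt_ik IH.
Qed.

Lemma rowpre_A n k m :
  rowpre n (grid n k) k.+1 m = [seq A n k.+1 j | j <- iota 1 m].
Proof.
apply: (eq_from_nth (x0 := false)); first by rewrite size_rowpre size_map size_iota.
move=> j; rewrite size_rowpre => lt_jm.
by rewrite nth_rowpre // (nth_map 0) ?size_iota // nth_iota // add1n A_rowpre.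
Qed.

Lemma A_row0 n j : A n 0 j = false. Proof. by []. Qed.

Lemma A_col0 n k : A n k 0 = false.
Proof. by case: k => // k; rewrite /A /= ltnn eqxx. Qed.

Lemma count_iota1 (F : nat -> bool) m : F 0 = false ->
  count F (iota 1 m) = \sum_(j < m.+1) F j.
Proof.
move=> F0; rewrite big_ord_recl F0 add0n -sumn_count sumnE big_map.
rewrite -(big_mkord xpredT (fun j => nat_of_bool (F j.+1))).
rewrite /index_iota subn0 -(addn0 1) iotaDl big_map.
by apply: eq_bigr => i _; rewrite add1n.
Qed.

Lemma A_greedy n k l : A n k.+1 l.+1 =
  [&& \sum_(j < l.+1) A n k.+1 j < n.+1, \sum_(i < k.+1) A n i l.+1 < n.+1 &
      ~~ has (fun i => has (fun j => [&& A n i j, A n i l.+1 & A n k.+1 j])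
                           (iota 1 l)) (iota 1 k)].
Proof.
rewrite A_rowpre nth_rowpre_last rowpre_A /decide /= count_map.
have -> : count (preim (A n k.+1) id) (iota 1 l) = \sum_(j < l.+1) A n k.+1 j.
  by rewrite count_iota1 //= A_col0.
have -> : sumn [seq (grid n k i l.+1 : nat) | i <- iota 1 k] =
          \sum_(i < k.+1) A n i l.+1.
  rewrite -(count_iota1 (fun i => A n i l.+1)) // -sumn_count; congr sumn.
  apply/eq_in_map => i; rewrite mem_iota add1n ltnS => /andP [_ le_ik].
  by rewrite grid_A.
congr [&& _, _ & ~~ _]; apply: eq_in_has => i.
rewrite mem_iota add1n ltnS => /andP [_ le_ik].
apply: eq_in_has => j; rewrite mem_iota add1n ltnS => /andP [j_gt0 le_jl].
rewrite !grid_A // (nth_map 0) ?size_iota; last by case: j j_gt0 le_jl.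
by rewrite nth_iota; [rewrite add1n prednK | case: j j_gt0 le_jl].
Qed.

Lemma A_row_prefix {n k l} : A n k l -> \sum_(j < l) A n k j <= n.
Proof.
case: k => [|k]; first by rewrite A_row0.
by case: l => [|l]; [rewrite A_col0 | rewrite A_greedy ltnS => /and3P []].
Qed.

Lemma A_col_prefix {n k l} : A n k l -> \sum_(i < k) A n i l <= n.
Proof.
case: k => [|k]; first by rewrite A_row0.
by case: l => [|l]; [rewrite A_col0 | rewrite A_greedy ltnS => /and3P []].
Qed.

Lemma rectangle_of_not_A {n k l} : 0 < k -> 0 < l -> ~~ A n k l ->
    \sum_(j < l) A n k j <= n -> \sum_(i < k) A n i l <= n ->
  exists i j, [/\ i < k, j < l, A n i j, A n i l & A n k j].
Proof.
case: k => [//|k]; case: l => [//|l] _ _.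
rewrite A_greedy => + row_le col_le; rewrite ltnS row_le ltnS col_le /= negbK.
case/hasP => i; rewrite mem_iota add1n => /andP [_ lt_ik].
case/hasP => j; rewrite mem_iota add1n => /andP [_ lt_jl] /and3P [Aij Ail Akj].
by exists i, j.
Qed.

Lemma leq_sum_ord_widen {F : nat -> bool} {m p} : m <= p ->
  \sum_(i < m) F i <= \sum_(i < p) F i.
Proof.
move=> le_mp; rewrite (big_ord_widen p (fun i => nat_of_bool (F i)) le_mp).
by rewrite [X in _ <= X](bigID (fun i : 'I_p => i < m)) leq_addr.
Qed.

Lemma sum_gt0 {I : finType} {F : I -> nat} (i : I) : 0 < F i -> 0 < \sum_j F j.
Proof. by move=> /leq_trans; apply; rewrite (bigD1 i) //= leq_addr. Qed.

Lemma sum_le_of_prefix_le (F : nat -> bool) c M :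
    (forall m, F m -> \sum_(j < m) F j <= c) ->
  \sum_(j < M) F j <= c.+1.
Proof.
move=> prefix_le; elim: M => [|M IH]; first by rewrite big_ord0.
rewrite big_ord_recr /=; case FM: (F M); last by rewrite addn0.
by rewrite addn1 ltnS prefix_le.
Qed.

Lemma sum_except_le (F : nat -> bool) (P : pred nat) c M s :
    \sum_(j < M) F j <= c.+1 -> F s -> s < M -> ~~ P s ->
  \sum_(j < M) (F j && P j) <= c.
Proof.
move=> sum_le Fs lt_sM nPs; rewrite -ltnS; apply: leq_trans sum_le.
rewrite [X in X < _](bigD1 (Ordinal lt_sM)) // [X in _ < X](bigD1 (Ordinal lt_sM)) //=.
rewrite Fs (negbTE nPs) add0n add1n ltnS.
by apply: leq_sum => j _; case: (P j); rewrite ?andbT ?andbF.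
Qed.

Lemma sum_guard_le (I : finType) (a : pred I) (F : I -> nat) c d :
    (forall i, a i -> F i <= c) -> \sum_i a i <= d ->
  \sum_i a i * F i <= d * c.
Proof.
move=> F_le sum_a_le; apply: leq_trans (leq_mul sum_a_le (leqnn c)).
rewrite big_distrl /= leq_sum // => i _.
by case: (boolP (a i)) => [/F_le|_]; rewrite ?mul1n ?mul0n.
Qed.

(* Induction on [c]: once some partial sum exceeds [c], the bound [c.+1]
   leaves no room for a later [F j]. *)
Lemma support_bounded_of_sum_le {F : nat -> bool} {c} :
  (forall M, \sum_(j < M) F j <= c) -> exists N, forall j, F j -> j < N.
Proof.
elim: c => [|c IHc] sum_le.
  by exists 0 => j Fj; have := sum_le j.+1; rewrite big_ord_recr /= Fj addn1.
have [[M0 lt_c_M0] | small] := classic (exists M, c < \sum_(j < M) F j).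
  exists M0 => j Fj; rewrite ltnNge; apply/negP => le_M0j.
  have := sum_le j.+1; rewrite big_ord_recr /= Fj addn1 ltnS leqNgt => /negP; apply.
  exact: leq_trans lt_c_M0 (leq_sum_ord_widen le_M0j).
apply: IHc => M; rewrite leqNgt; apply/negP => lt_c_M; apply: small; exists M.
by rewrite -ltnS.
Qed.

Lemma row_sum_le n k M : \sum_(j < M) A n k j <= n.+1.
Proof. exact: sum_le_of_prefix_le (@A_row_prefix n k). Qed.

Lemma col_sum_le n K l : \sum_(i < K) A n i l <= n.+1.
Proof.
exact: (sum_le_of_prefix_le (A n ^~ l)) (fun i => @A_col_prefix n i l).
Qed.

Lemma row_sum_except n i M s (P : pred nat) : A n i s -> s < M -> ~~ P s ->
  \sum_(j < M) (A n i j && P j) <= n.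
Proof. exact: sum_except_le (row_sum_le n i M). Qed.

Lemma col_sum_except n K j s (P : pred nat) : A n s j -> s < K -> ~~ P s ->
  \sum_(i < K) (A n i j && P i) <= n.
Proof. exact: (sum_except_le (fun i => A n i j)) (col_sum_le n K j). Qed.

Lemma rows_support_bounded n K : exists N, forall i j, i < K -> A n i j -> j < N.
Proof.
elim: K => [|K [N rows_lt]]; first by exists 0.
have [N' row_lt] := support_bounded_of_sum_le (row_sum_le n K).
exists (maxn N N') => i j; rewrite ltnS leq_eqVlt => /orP [/eqP ->|lt_iK] Aij.
  by rewrite leq_max (row_lt _ Aij) orbT.
by rewrite leq_max (rows_lt _ _ lt_iK Aij).
Qed.

(* Beyond all ones of the earlier rows, row [k] can only be blocked by
   its own earlier ones. *)
Lemma row_nonempty n k : 0 < k -> exists j, A n k j.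
Proof.
move=> k_gt0; have [N rows_lt] := rows_support_bounded n k.
case: (leqP (\sum_(j < N.+1) A n k j) n) => [row_le | lt_n_row].
  case: (boolP (A n k N.+1)) => [AkN | nAkN]; first by exists N.+1.
  have col0 : \sum_(i < k) A n i N.+1 = 0.
    rewrite big1 // => i _; case: (boolP (A n i N.+1)) => // /(rows_lt _ _ (ltn_ord i)).
    by rewrite ltnNge leqnSn.
  have [|i [j [_ _ _ _ Akj]]] := @rectangle_of_not_A n k N.+1 k_gt0 isT nAkN row_le.
    by rewrite col0.
  by exists j.
have : \sum_(j < N.+1) A n k j != 0 by rewrite -lt0n (leq_ltn_trans _ lt_n_row).
by rewrite sum_nat_eq0 => /forallPn [j]; rewrite eqb0 negbK; exists j.
Qed.

Lemma sum_ord_geq f M : \sum_(l < M) (f <= l) = M - f.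
Proof.
elim: M => [|M IH]; first by rewrite big_ord0.
by rewrite big_ord_recr /= IH; case: leqP => /=; lia.
Qed.

Section RowSpan.

Variables (n k f L : nat).
Hypotheses (k_gt0 : 0 < k) (f_gt0 : 0 < f) (le_fL : f <= L).
Hypotheses (Akf : A n k f) (AkL : A n k L).

Definition rect_count l :=
  \sum_(s < L) \sum_(i < k) A n k s * (A n i s * (A n i l && (s < l))).

Definition column_blocked l := ~~ A n k l && (rect_count l == 0).

Definition chain_count i l :=
  \sum_(i' < k) \sum_(j < f)
    A n i' f * (A n i' j * ((A n i j && (i' < i)) * (A n i l && (f < l)))).

Lemma sum_rect_count : \sum_(l < L.+1) rect_count l <= n ^ 3.
Proof.
rewrite /rect_count exchange_big /=.
under eq_bigr => s _ do rewrite exchange_big /=.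
under eq_bigr => s _ do under eq_bigr => i _ do rewrite -big_distrr -big_distrr /=.
under eq_bigr => s _ do rewrite -big_distrr /=.
rewrite expnS; apply: sum_guard_le (A_row_prefix AkL) => s Aks.
rewrite expnS expn1; apply: sum_guard_le (A_col_prefix Aks) => i Ais.
by apply: row_sum_except Ais _ _; rewrite ?ltnn // ltnS ltnW.
Qed.

Lemma sum_chain_count : \sum_(l < L.+1) \sum_(i < k) chain_count i l <= n ^ 4.
Proof.
rewrite /chain_count exchange_big /=.
under eq_bigr => i _ do rewrite exchange_big /=.
under eq_bigr => i _ do under eq_bigr => i' _ do rewrite exchange_big /=.
rewrite exchange_big /=; under eq_bigr => i' _ do rewrite exchange_big /=.
under eq_bigr => i' _ do under eq_bigr => j _ do under eq_bigr => i _ do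
  rewrite -big_distrr -big_distrr -big_distrr /=.
under eq_bigr => i' _ do under eq_bigr => j _ do rewrite -big_distrr -big_distrr /=.
under eq_bigr => i' _ do rewrite -big_distrr /=.
rewrite expnS; apply: sum_guard_le (A_col_prefix Akf) => i' Ai'f.
rewrite expnS; apply: sum_guard_le (A_row_prefix Ai'f) => j Ai'j.
rewrite expnS expn1; apply: sum_guard_le _ => [i /andP [Aij _]|].
  apply: row_sum_except Aij _ _; last by rewrite -leqNgt ltnW.
  by rewrite ltnS ltnW // (leq_trans (ltn_ord j) le_fL).
by apply: col_sum_except Ai'j _ _; rewrite ?ltnn.
Qed.

Lemma blocked_column_full {l} : f <= l <= L -> column_blocked l ->
  n < \sum_(i < k) A n i l.
Proof.
move=> /andP [le_fl le_lL] /andP [nAkl /eqP rect0].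
rewrite ltnNge; apply/negP => col_le.
have row_le : \sum_(j < l) A n k j <= n.
  exact: leq_trans (leq_sum_ord_widen le_lL) (A_row_prefix AkL).
have [i [j [lt_ik lt_jl Aij Ail Akj]]] :=
  rectangle_of_not_A k_gt0 (leq_trans f_gt0 le_fl) nAkl row_le col_le.
suff : 0 < rect_count l by rewrite rect0.
rewrite /rect_count; apply: (sum_gt0 (Ordinal (leq_trans lt_jl le_lL))).
apply: (sum_gt0 (Ordinal lt_ik)).
by rewrite /= Akj Aij Ail lt_jl.
Qed.

(* Row [i] cannot have a one in column [f] (that would be a rectangle for
   [l]), so condition (3) must be what excludes [a_{if}]. *)
Lemma blocked_column_chain {l i} : f <= l <= L -> column_blocked l ->
  i < k -> A n i l -> 0 < chain_count i l.
Proof.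
move=> /andP [le_fl le_lL] /andP [nAkl /eqP rect0] lt_ik Ail.
have lt_fl : f < l by rewrite ltn_neqAle le_fl andbT; apply: contraNneq nAkl => <-.
have nAif : ~~ A n i f.
  apply/negP => Aif; suff : 0 < rect_count l by rewrite rect0.
  rewrite /rect_count; apply: (sum_gt0 (Ordinal (leq_trans lt_fl le_lL))).
  apply: (sum_gt0 (Ordinal lt_ik)).
  by rewrite /= Akf Aif Ail lt_fl.
have row_le : \sum_(j < f) A n i j <= n.
  exact: leq_trans (leq_sum_ord_widen (ltnW lt_fl)) (A_row_prefix Ail).
have col_le : \sum_(i' < i) A n i' f <= n.
  have le_prefix := @leq_sum_ord_widen (A n ^~ f) _ _ (ltnW lt_ik).
  exact: leq_trans le_prefix (A_col_prefix Akf).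
have i_gt0 : 0 < i by rewrite lt0n; apply: contraTneq Ail => ->; rewrite A_row0.
have [i' [j [lt_i'i lt_jf Ai'j Ai'f Aij]]] :=
  rectangle_of_not_A i_gt0 f_gt0 nAif row_le col_le.
rewrite /chain_count; apply: (sum_gt0 (Ordinal (ltn_trans lt_i'i lt_ik))).
apply: (sum_gt0 (Ordinal lt_jf)).
by rewrite /= Ai'f Ai'j Aij lt_i'i Ail lt_fl.
Qed.

Lemma blocked_columns_count :
  n.+1 * \sum_(l < L.+1) ((f <= l) && column_blocked l) <= n ^ 4.
Proof.
apply: leq_trans sum_chain_count; rewrite big_distrr /= leq_sum // => l _.
case: (boolP ((f <= l) && column_blocked l)) => [/andP [le_fl blocked] | _].
  have le_flL : f <= l <= L by rewrite le_fl -ltnS ltn_ord.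
  rewrite muln1; apply: leq_trans (blocked_column_full le_flL blocked) _.
  apply: leq_sum => i _; case: (boolP (A n i l)) => // Ail.
  exact: blocked_column_chain le_flL blocked (ltn_ord i) Ail.
by rewrite muln0.
Qed.

Lemma row_span_le :
  L.+1 - f <= n.+1 + n ^ 3 + \sum_(l < L.+1) ((f <= l) && column_blocked l).
Proof.
rewrite -sum_ord_geq.
apply: leq_trans (leq_add (leq_add (row_sum_le n k L.+1) sum_rect_count) (leqnn _)).
rewrite -!big_split /= leq_sum // => l _.
rewrite /column_blocked; case: (A n k l); case: (f <= l); case: (rect_count l) => //=.
Qed.

End RowSpan.

Theorem theorem3p1 (n : nat) (hn : 0 < n) (k : nat) (hk : 0 < k) :
  exists f l : nat,
    [/\ 0 < f <= l, A n k f, A n k l,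
        (forall j, A n k j -> f <= j <= l) &
        (((l - f + 1)%N%:Z < 2 * n%:Z ^+ 3 - n%:Z * (n%:Z - 3))%R)].
Proof.
have [N row_lt] := support_bounded_of_sum_le (row_sum_le n k).
have [f Akf f_min] := ex_minnP (row_nonempty n k hk).
have [L AkL L_max] := ex_maxnP (row_nonempty n k hk) (fun j Akj => ltnW (row_lt j Akj)).
have f_gt0 : 0 < f by rewrite lt0n; apply: contraTneq Akf => ->; rewrite A_col0.
have le_fL := L_max f Akf.
exists f, L; split; rewrite ?f_gt0 //; first by move=> j Akj; rewrite f_min ?L_max.
have span := row_span_le n k f L AkL.
have blocked := blocked_columns_count n k f L hk f_gt0 le_fL Akf AkL.
move: (\sum_(l < L.+1) _) span blocked => c span blocked.
rewrite !expnS expn0 muln1 in span blocked.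
nia.
Qed.
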